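(* Let $G$ be a locally compact second countable group, $\rho_0,\rho_1:G\to\mathrm{Homeo}^+(S^1)$ continuous actions, and $\varphi:S^1\to S^1$ a covering map of degree $k$ such that $\rho_0(g)\varphi=\varphi\rho_1(g)$ for all $g\in G$. Then $\rho_0^*(e^b)=k\,\rho_1^*(e^b)$ in $H^2_{bc}(G,\mathbb Z)$.
   Context: $S^1=\mathbb Z\backslash\mathbb R$. For $f\in\mathrm{Homeo}^+(S^1)$ let $\bar f$ be its lift with $\bar f(0)\in[0,1)$, $T(x)=x+1$, and define the Euler cocycle $c(f,g)\in\{0,1\}$ by $\overline{fg}\,T^{c(f,g)}=\bar f\bar g$. $H^2_{bc}(G,\mathbb Z)$ is the cohomology of $G$ computed with bounded Borel $\mathbb Z$-valued cochains, and for a continuous action $\rho$, $\rho^*(e^b)\in H^2_{bc}(G,\mathbb Z)$ is the class of the bounded Borel cocycle $(g,h)\mapsto c(\rho(g),\rho(h))$. *)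

From HB Require Import structures.
From mathcomp Require Import all_boot all_order all_algebra.
From mathcomp Require Import all_classical all_reals all_analysis.
From mathcomp Require Import generic_quotient.
Set Implicit Arguments. Unset Strict Implicit. Unset Printing Implicit Defensive.
Import Order.TTheory GRing.Theory Num.Theory.
Local Open Scope classical_set_scope.
Local Open Scope ring_scope.
Import numFieldNormedType.Exports.
Local Open Scope quotient_scope.

Section Circle.
Variable R : realType.

Definition circ_rel (x y : R) : bool := (x - y) \is a Num.int.

Lemma circ_rel_refl : reflexive circ_rel.
Proof. by move=> x; rewrite /circ_rel subrr rpred0. Qed.
Lemma circ_rel_sym : symmetric circ_rel.
Proof. by move=> x y; rewrite /circ_rel -opprB rpredN. Qed.
Lemma circ_rel_trans : transitive circ_rel.
Proof.
move=> y x z hxy hyz; rewrite /circ_rel.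
have -> : x - z = (x - y) + (y - z) by rewrite addrA subrK.
by rewrite rpredD.
Qed.

Definition circ_equiv : equiv_rel R :=
  EquivRel circ_rel circ_rel_refl circ_rel_sym circ_rel_trans.

Definition circle_quot := {eq_quot circ_equiv}.
Definition circle := quotient_topology circle_quot.

Definition cproj : R -> circle := \pi_circle.

Definition is_lift (f : circle -> circle) (F : R -> R) : Prop :=
  continuous F /\ forall x, cproj (F x) = f (cproj x).

Definition homeomorphism (X : topologicalType) (f : X -> X) : Prop :=
  exists g : X -> X, [/\ cancel f g, cancel g f, continuous f & continuous g].

(* Homeo^+(S^1): orientation-preserving homeomorphisms, i.e. those admitting
   an increasing lift *)
Definition homeo_plus (f : circle -> circle) : Prop :=
  homeomorphism f /\ exists F, is_lift f F /\ {homo F : x y / x < y}.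

Definition bar (f : circle -> circle) : R -> R :=
  xget (fun x : R => x) [set F | is_lift f F /\ 0 <= F 0 < 1].

Definition euler_c (f g : circle -> circle) : int :=
  xget 0%R [set n : int | forall x, bar (f \o g) (x + n%:~R) = bar f (bar g x)].

Definition has_degree (phi : circle -> circle) (k : int) : Prop :=
  exists F, is_lift phi F /\ forall x, F (x + 1) = F x + k%:~R.

End Circle.

Definition covering_map (X Y : topologicalType) (p : X -> Y) : Prop :=
  continuous p /\
  forall y : Y, exists U : set Y, [/\ open U, U y &
    exists (I : Type) (V : I -> set X),
      [/\ (forall i, open (V i)),
          (forall i j, i <> j -> V i `&` V j = set0),
          p @^-1` U = \bigcup_i V i &
          forall i, exists q : Y -> X,
            [/\ {within V i, continuous p}, {within U, continuous q},
                (forall x, V i x -> U (p x) /\ q (p x) = x) &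
                (forall u, U u -> V i (q u) /\ p (q u) = u)]]].

Definition lcsc_group (G : topologicalType) (mul : G -> G -> G) (one : G)
    (inv : G -> G) : Prop :=
  [/\ (forall x y z, mul x (mul y z) = mul (mul x y) z),
      (forall x, mul one x = x /\ mul x one = x),
      (forall x, mul (inv x) x = one /\ mul x (inv x) = one),
      continuous (fun p : G * G => mul p.1 p.2) /\ continuous inv &
      [/\ hausdorff_space G, locally_compact [set: G] & @second_countable G]].

Definition Borel (T : topologicalType) (A : set T) : Prop :=
  smallest (sigma_algebra setT) open A.

Definition borel_int_fun (T : topologicalType) (b : T -> int) : Prop :=
  forall n : int, Borel (b @^-1` [set n]).

Definition bounded_int_fun (T : Type) (b : T -> int) : Prop :=
  exists M : int, forall t, `|b t| <= M.

(* continuous action G -> Homeo^+(S^1), as a continuous action map *)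
Definition cont_circle_action (R : realType) (G : topologicalType)
    (mul : G -> G -> G) (rho : G -> circle R -> circle R) : Prop :=
  [/\ (forall g, homeo_plus (rho g)),
      (forall g h, rho (mul g h) = rho g \o rho h) &
      continuous (fun p : G * circle R => rho p.1 p.2)].

Definition bc_cohomologous (G : topologicalType) (mul : G -> G -> G)
    (c1 c2 : G -> G -> int) : Prop :=
  exists b : G -> int, [/\ borel_int_fun b, bounded_int_fun b &
    forall g h, c1 g h - c2 g h = b g + b h - b (mul g h)].

From HB Require Import structures.
From mathcomp Require Import all_boot all_order all_algebra.
From mathcomp Require Import all_classical all_reals all_analysis.
From mathcomp Require Import measurable_realfun.
From mathcomp Require Import zify lra.
Import Order.TTheory GRing.Theory Num.Theory.
Import numFieldNormedType.Exports.
Local Open Scope classical_set_scope.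
Local Open Scope ring_scope.
Set Implicit Arguments. Unset Strict Implicit. Unset Printing Implicit Defensive.

(* Let [Phi] be a lift of [phi], so that [Phi (x + 1) = Phi x + k].  For every [g],
   [bar (rho0 g) \o Phi] and [Phi \o bar (rho1 g)] lift the same map of the circle,
   hence differ by an integer [d g].  Computing the lift of [rho0 (g h)] at [Phi 0]
   in two ways gives [c0 g h - k c1 g h = d g + d h - d (g h)].  The cochain [d] is
   bounded because canonical lifts move points by less than [2], and Borel
   because [bar f x] can be read off the two circle points [f 0] and [f x] through
   the fractional part. *)

Section CircleLifts.
Variable R : realType.
Implicit Types (x y : R) (h F : R -> R).

Lemma cprojP x y : cproj x = cproj y <-> (x - y) \is a Num.int.
Proof. by split=> h; apply/(@eqquotP _ _ (circle_quot R) x y). Qed.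

Lemma cprojDz x (n : int) : cproj (x + n%:~R) = cproj x.
Proof. by apply/cprojP; rewrite addrC addKr intr_int. Qed.

Lemma int_valued_continuous_nonincr h x y : continuous h ->
  (forall z, h z \is a Num.int) -> x <= y -> h y <= h x.
Proof.
move=> ch hint xy; rewrite leNgt; apply/negP => hxy.
have /intrP [m hm] := hint x; have /intrP [n hn] := hint y.
have hx1 : h x + 1 <= h y.
  by move: hxy; rewrite hm hn -[1]/(1%:~R) -intrD ltr_int ler_int; lia.
have [c _ hc] : exists2 c, c \in `[x, y] & h c = h x + 2^-1.
  apply: IVT => //; first exact: continuous_subspaceT.
  by rewrite min_l ?max_r ?(ltW hxy) //; apply/andP; split; lra.
have /intrP [p hp] : h c - h x \is a Num.int by rewrite rpredB.
have : (0 < p)%R && (p < 1)%R.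
  by rewrite -(ltr_int R) -(ltr_int R) -hp hc addrC addKr; apply/andP; split; lra.
lia.
Qed.

Lemma int_valued_continuous_const h : continuous h ->
  (forall z, h z \is a Num.int) -> forall x y, h x = h y.
Proof.
move=> ch hint; suff hle : forall x y, x <= y -> h x = h y.
  by move=> x y; case: (leP x y) => [/hle //|/ltW /hle ->].
move=> x y xy; apply/le_anti/andP; split; last exact: int_valued_continuous_nonincr.
rewrite -lerN2; apply: (@int_valued_continuous_nonincr (fun z => - h z)) => //.
- by move=> z; exact: (continuousN (ch z)).
- by move=> z; rewrite rpredN.
Qed.

Lemma lifts_eq_up_to_int F1 F2 : continuous F1 -> continuous F2 ->
  (forall x, cproj (F1 x) = cproj (F2 x)) ->
  exists n : int, forall x, F1 x = F2 x + n%:~R.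
Proof.
move=> c1 c2 e.
have dint x : (F1 - F2) x \is a Num.int by apply/cprojP/e.
have cd : continuous (F1 - F2) by move=> x; exact: (continuousB (c1 x) (c2 x)).
have /intrP [n hn] := dint 0; exists n => x.
have := int_valued_continuous_const cd dint x 0.
by rewrite hn /= => <-; rewrite addrC subrK.
Qed.

Lemma lift_shiftz F d : (forall x, F (x + 1) = F x + d) ->
  forall x (m : int), F (x + m%:~R) = F x + d * m%:~R.
Proof.
move=> F1.
have Fn (n : nat) x : F (x + n%:R) = F x + d * n%:R.
  elim: n x => [|n IH] x; first by rewrite !mulr0 !addr0.
  by rewrite -natr1 addrA F1 IH mulrDr mulr1 addrA.
move=> x [n|n]; first by rewrite -pmulrn Fn.
rewrite NegzE intrN -pmulrn.
by have := Fn n.+1 (x - n.+1%:R); rewrite subrK => ->; rewrite mulrN addrK.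
Qed.

End CircleLifts.

Section FractionalPart.
Variable R : realType.
Implicit Types x : R.

Definition frac x := x - (Num.floor x)%:~R.

Lemma frac_itv x : 0 <= frac x < 1.
Proof.
by have := floor_itv x; rewrite /frac intrD => /andP [? ?]; apply/andP; split; lra.
Qed.

Lemma fracDz x (m : int) : frac (x + m%:~R) = frac x.
Proof. by rewrite /frac floorDrz ?intr_int // intrKfloor intrD; lra. Qed.

Lemma frac_id x : 0 <= x < 1 -> frac x = x.
Proof. by move=> x01; rewrite /frac (@floor_def _ x 0) ?subr0 // add0r mulr0z. Qed.

Lemma measurable_frac : measurable_fun setT (frac : R -> R).
Proof.
apply: measurable_funB; first exact: measurable_id.
by apply: nondecreasing_measurable => // x y xy; rewrite ler_int le_floor.
Qed.

Definition cfrac (q : circle R) : R := frac (repr q).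

Lemma cfrac_cproj x : cfrac (cproj x) = frac x.
Proof.
have /cprojP/intrP [m hm] : cproj (repr (cproj x)) = cproj x by rewrite /cproj reprK.
by rewrite /cfrac -(subrK x (repr (cproj x))) hm addrC fracDz.
Qed.

Lemma open_cfrac_itv a : 0 < a <= 1 -> open [set q : circle R | 0 < cfrac q < a].
Proof.
move=> /andP [a0 a1]; rewrite /open /= /quotient_open.
suff -> : @cproj R @^-1` [set q | 0 < cfrac q < a] =
    \bigcup_(n in [set: int]) [set` `]n%:~R, n%:~R + a[%R].
  by apply: bigcup_open => n _; exact: interval_open.
apply/seteqP; split => x /=.
- rewrite cfrac_cproj /frac => /andP [? ?]; exists (Num.floor x) => //=.
  by rewrite in_itv /=; apply/andP; split; lra.
- move=> [n _]; rewrite /= in_itv /= cfrac_cproj /frac => /andP [? ?].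
  have -> : Num.floor x = n by apply: floor_def; rewrite intrD; apply/andP; split; lra.
  by apply/andP; split; lra.
Qed.

End FractionalPart.

Section CanonicalLift.
Variables (R : realType) (f : circle R -> circle R).
Hypothesis hf : homeo_plus f.
Implicit Types x y : R.

Lemma bar_spec : is_lift f (bar f) /\ 0 <= bar f 0 < 1.
Proof.
suff : exists F : R -> R, is_lift f F /\ 0 <= F 0 < 1.
  by move/(xgetPex (fun x : R => x)).
case: hf => _ [F [[cF lF] _]].
exists (fun x => F x + (- Num.floor (F 0))%:~R); split; first split.
- by move=> x; apply: continuousD; [exact: cF | exact: cvg_cst].
- by move=> x; rewrite cprojDz.
- have := floor_itv (F 0); rewrite intrN intrD => /andP [? ?].
  by apply/andP; split; lra.
Qed.

Lemma bar_continuous : continuous (bar f). Proof. by case: bar_spec => [[]]. Qed.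
Lemma bar_lift x : cproj (bar f x) = f (cproj x). Proof. by case: bar_spec => [[]]. Qed.
Lemma bar0_itv : 0 <= bar f 0 < 1. Proof. by case: bar_spec. Qed.

Lemma bar_increasing : {homo bar f : x y / x < y}.
Proof.
case: hf => _ [F [[cF lF] iF]].
have [n hn] := lifts_eq_up_to_int bar_continuous cF
  (fun x => etrans (bar_lift x) (esym (lF x))).
by move=> x y xy; rewrite !hn ltrD2r iF.
Qed.

Lemma bar_nondecreasing : {homo bar f : x y / x <= y}.
Proof. by move=> x y; rewrite le_eqVlt => /orP [/eqP -> //|/bar_increasing /ltW]. Qed.

(* [bar f (x + 1) - bar f x] is a constant integer [n > 0]; if [n >= 2], the
   intermediate value theorem would give [f c = f 0] for some [0 < c < 1]. *)
Lemma bar_add1 x : bar f (x + 1) = bar f x + 1.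
Proof.
have [n hn] : exists n : int, forall x, bar f (x + 1) = bar f x + n%:~R.
  apply: lifts_eq_up_to_int; last by move=> y; rewrite !bar_lift -[1]/(1%:~R) cprojDz.
  - move=> y; apply: (@continuous_comp _ _ _ (fun x : R => x + 1) (bar f) y).
      by apply: continuousD; [exact: cvg_id | exact: cvg_cst].
    exact: bar_continuous.
  - exact: bar_continuous.
rewrite hn; congr (_ + _); apply/eqP; rewrite -[1]/(1%:~R) eqr_int.
have h10 : bar f 1 = bar f 0 + n%:~R by rewrite -hn add0r.
have n_gt0 : 0 < n by have := @bar_increasing 0 1 ltr01; rewrite h10 ltrDl ltr0z.
suff : ~ (1 < n)%R by lia.
move=> n_gt1.
have [c c01 hc] : exists2 c, c \in `[0, 1] & bar f c = bar f 0 + 1.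
  apply: IVT => //; first exact: continuous_subspaceT bar_continuous.
  have h01 := @bar_increasing 0 1 ltr01.
  have n_ge2 : 2%:~R <= n%:~R :> R by rewrite ler_int.
  by rewrite min_l ?max_r ?(ltW h01) // h10; apply/andP; split; lra.
have /cprojP : cproj c = cproj 0.
  case: hf => [[g [fK _ _ _]] _]; apply: (can_inj fK).
  by rewrite -!bar_lift hc -[1]/(1%:~R) cprojDz.
rewrite subr0 => /intrP [p hp].
move: c01 hc; rewrite in_itv /= hp ler0z -[1%R]/(1%:~R) ler_int => /andP [p0 p1].
have [->|->] : p = 0 \/ p = 1 by lia.
- by rewrite mulr0z; lra.
- rewrite -[1%:~R]/(1%R) h10 => h.
  have /intr_inj n1 : n%:~R = 1%:~R :> R by lra.
  by move: n_gt1; rewrite n1.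
Qed.

Lemma bar_addz x (m : int) : bar f (x + m%:~R) = bar f x + m%:~R.
Proof. by rewrite (lift_shiftz bar_add1) mul1r. Qed.

Lemma bar0_cfrac : bar f 0 = cfrac (f (cproj 0)).
Proof. by rewrite -bar_lift cfrac_cproj frac_id // bar0_itv. Qed.

(* Only the circle points [f 0] and [f x] enter, which makes [bar f x] Borel in [f]. *)
Lemma bar_cfrac x :
  bar f x = bar f 0 + frac (cfrac (f (cproj x)) - bar f 0) + (Num.floor x)%:~R.
Proof.
set y := frac x; have /andP [y0 y1] := frac_itv x.
have Ax : bar f x = bar f y + (Num.floor x)%:~R by rewrite -bar_addz /y /frac subrK.
rewrite -bar_lift cfrac_cproj !Ax fracDz; congr (_ + _).
have /andP [? ?] := bar0_itv.
have by_ge : bar f 0 <= bar f y by exact: bar_nondecreasing.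
have by_lt : bar f y < bar f 0 + 1 by rewrite -bar_add1 bar_increasing // add0r.
have -> : frac (bar f y) - bar f 0 = bar f y - bar f 0 + (- Num.floor (bar f y))%:~R.
  by rewrite /frac intrN; lra.
by rewrite fracDz frac_id; [lra | apply/andP; split; lra].
Qed.

Lemma bar_displacement x : `|bar f x - x| < 2.
Proof.
rewrite bar_cfrac; have /andP [? ?] := bar0_itv.
have /andP [? ?] := frac_itv (cfrac (f (cproj x)) - bar f 0).
have := floor_itv x; rewrite intrD => /andP [? ?].
by rewrite ltr_norml; apply/andP; split; lra.
Qed.

End CanonicalLift.

Lemma euler_cP (R : realType) (f g : circle R -> circle R) :
  homeo_plus f -> homeo_plus g -> homeo_plus (f \o g) ->
  forall x, bar (f \o g) (x + (euler_c f g)%:~R) = bar f (bar g x).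
Proof.
move=> hf hg hfg.
suff : exists n : int, forall x, bar (f \o g) (x + n%:~R) = bar f (bar g x).
  by move/(xgetPex 0).
have [n hn] : exists n : int, forall x, bar f (bar g x) = bar (f \o g) x + n%:~R.
  apply: lifts_eq_up_to_int; last by move=> x; rewrite !bar_lift.
  - by move=> x; apply: continuous_comp; exact: bar_continuous.
  - exact: bar_continuous.
by exists n => x; rewrite hn bar_addz.
Qed.

Definition pointed_at (T : Type) (t0 : T) : Type := T.

Section BorelMeasurability.
Variables (R : realType) (T : topologicalType) (t0 : T).
HB.instance Definition _ := Choice.on (pointed_at t0).
HB.instance Definition _ := isPointed.Build (pointed_at t0) t0.

(* [measurableType] requires a pointed carrier; [t0] serves only as that point. *)
Definition borel_space := g_sigma_algebraType (@open T : set (set (pointed_at t0))).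

Lemma measurable_cfrac_comp (u : T -> circle R) : continuous u ->
  measurable_fun (setT : set borel_space) (fun t => cfrac (u t)).
Proof.
move=> cu.
have mopen V : open V -> @measurable _ borel_space (u @^-1` V).
  by move=> oV; apply: sub_sigma_algebra; exact: (proj1 (continuousP u) cu).
apply: (measurability (@RGenInftyO.G R)) => [|/= _ [_] [r] -> <-].
  exact: RGenInftyO.measurableE.
rewrite setTI.
have -> : (fun t => cfrac (u t)) @^-1` `]-oo, r[ = [set t | cfrac (u t) < r].
  by apply/seteqP; split => t /=; rewrite in_itv.
have cfrac_itv t : 0 <= cfrac (u t) < 1 by exact: frac_itv.
have [r0|r0] := leP r 0.
  suff -> : [set t | cfrac (u t) < r] = set0 by exact: measurable0.
  by apply/seteqP; split => t //= h; have /andP [? ?] := cfrac_itv t; lra.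
have [r1|r1] := ltP 1 r.
  suff -> : [set t | cfrac (u t) < r] = setT by exact: measurableT.
  by apply/seteqP; split => t //= _; have /andP [? ?] := cfrac_itv t; lra.
(* For [0 < r <= 1]: either [cfrac (u t) = 0] or [0 < cfrac (u t) < r]. *)
suff -> : [set t | cfrac (u t) < r] =
    ~` (u @^-1` [set q | 0 < cfrac q < 1]) `|` u @^-1` [set q | 0 < cfrac q < r].
  apply: measurableU; last by apply: mopen; apply: open_cfrac_itv; rewrite r0 r1.
  by apply: measurableC; apply: mopen; apply: open_cfrac_itv; rewrite ltr01 lexx.
apply/seteqP; split => t /=; have /andP [? ?] := cfrac_itv t.
- move=> h; have [z|z] := leP (cfrac (u t)) 0.
    by left; move/andP => [? _]; lra.
  by right; apply/andP; split.
- case=> [h|/andP [_ h]] //; have [z|z] := leP (cfrac (u t)) 0; first lra.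
  by exfalso; apply: h; apply/andP; split.
Qed.

Lemma borel_int_funP (b : T -> int) :
  measurable_fun (setT : set borel_space) (fun t => (b t)%:~R : R) -> borel_int_fun b.
Proof.
move=> mb n.
have -> : b @^-1` [set n] = setT `&` (fun t => (b t)%:~R : R) @^-1` [set n%:~R].
  by apply/seteqP; split => t /=; [move=> <- | move=> [_ /intr_inj]].
exact: (mb measurableT _ (measurable_set1 _)).
Qed.

End BorelMeasurability.

Section ContinuousAction.
Variables (R : realType) (G : topologicalType) (mul : G -> G -> G).
Variable rho : G -> circle R -> circle R.
Hypothesis act : cont_circle_action mul rho.

Lemma continuous_orbit (q : circle R) : continuous (fun g => rho g q).
Proof.
case: act => _ _ crho g.
apply: (@continuous_comp _ _ _ (fun g => (g, q)) (fun p : G * circle R => rho p.1 p.2) g).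
  exact: (cvg_pair cvg_id (cvg_cst q)).
exact: (crho (g, q)).
Qed.

Lemma measurable_bar_orbit (g0 : G) (x : R) :
  measurable_fun (setT : set (borel_space g0)) (fun g => bar (rho g) x).
Proof.
case: act => hp _ _.
have -> : (fun g => bar (rho g) x) = (fun g => cfrac (rho g (cproj 0)) +
    frac (cfrac (rho g (cproj x)) - cfrac (rho g (cproj 0))) + (Num.floor x)%:~R).
  by apply/funext => g; rewrite (bar_cfrac (hp g)) (bar0_cfrac (hp g)).
have mc q : measurable_fun (setT : set (borel_space g0)) (fun g => cfrac (rho g q)).
  exact: measurable_cfrac_comp (@continuous_orbit q).
apply: measurable_funD; last exact: measurable_cst.
apply: measurable_funD; first exact: mc.
by apply: measurableT_comp; [exact: measurable_frac | exact: measurable_funB].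
Qed.

End ContinuousAction.

Lemma continuous_bounded_segment (R : realType) (F : R -> R) (a b : R) :
  continuous F -> exists M, forall x, a <= x <= b -> `|F x| <= M.
Proof.
move=> cF.
have /compact_bounded [M0 [_ hM]] :=
  continuous_compact (continuous_subspaceT cF) (@segment_compact R a b).
exists (M0 + 1) => x xab; apply: (hM (M0 + 1)); first lra.
by exists x => //; rewrite in_itv.
Qed.

Section Semiconjugacy.
Variables (R : realType) (G : topologicalType) (mul : G -> G -> G).
Variables (rho0 rho1 : G -> circle R -> circle R) (phi : circle R -> circle R).
Variables (Phi : R -> R) (k : int).
Hypotheses (act0 : cont_circle_action mul rho0) (act1 : cont_circle_action mul rho1).
Hypothesis Phi_lift : is_lift phi Phi.
Hypothesis Phi_deg : forall x, Phi (x + 1) = Phi x + k%:~R.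
Hypothesis semiconj : forall g, rho0 g \o phi = phi \o rho1 g.

Let hp0 g : homeo_plus (rho0 g). Proof. by case: act0. Qed.
Let hp1 g : homeo_plus (rho1 g). Proof. by case: act1. Qed.
Let Phi_cont : continuous Phi. Proof. by case: Phi_lift. Qed.

Definition semiconj_defect (g : G) : int :=
  Num.floor (bar (rho0 g) (Phi 0) - Phi (bar (rho1 g) 0)).

Lemma semiconj_defectP g x :
  bar (rho0 g) (Phi x) = Phi (bar (rho1 g) x) + (semiconj_defect g)%:~R.
Proof.
have [n hn] : exists n : int,
    forall x, bar (rho0 g) (Phi x) = Phi (bar (rho1 g) x) + n%:~R.
  apply: lifts_eq_up_to_int.
  - by move=> y; apply: continuous_comp; [exact: Phi_cont | exact: bar_continuous].
  - by move=> y; apply: continuous_comp; [exact: bar_continuous | exact: Phi_cont].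
  case: Phi_lift => _ lPhi y.
  rewrite lPhi !bar_lift // lPhi.
  exact: (congr1 (fun f => f (cproj y)) (semiconj g)).
suff -> : semiconj_defect g = n by exact: hn.
by rewrite /semiconj_defect hn addrAC subrr add0r intrKfloor.
Qed.

Lemma euler_c_semiconj g h :
  euler_c (rho0 g) (rho0 h) - k * euler_c (rho1 g) (rho1 h) =
  semiconj_defect g + semiconj_defect h - semiconj_defect (mul g h).
Proof.
case: act0 act1 => _ hm0 _ [_ hm1 _].
set c0 := euler_c (rho0 g) (rho0 h); set c1 := euler_c (rho1 g) (rho1 h).
have E0 : bar (rho0 (mul g h)) (Phi 0) + c0%:~R = bar (rho0 g) (bar (rho0 h) (Phi 0)).
  rewrite -bar_addz // hm0 euler_cP //; rewrite -hm0; exact: hp0.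
have E1 : bar (rho1 g) (bar (rho1 h) 0) = bar (rho1 (mul g h)) 0 + c1%:~R.
  rewrite -bar_addz // hm1 euler_cP //; rewrite -hm1; exact: hp1.
have D1 := semiconj_defectP g (bar (rho1 h) 0).
have D2 : bar (rho0 g) (bar (rho0 h) (Phi 0)) =
    bar (rho0 g) (Phi (bar (rho1 h) 0)) + (semiconj_defect h)%:~R.
  by rewrite semiconj_defectP bar_addz.
have D3 := semiconj_defectP (mul g h) 0.
have Phi_c1 := lift_shiftz Phi_deg (bar (rho1 (mul g h)) 0) c1.
rewrite E1 in D1; apply: (@intr_inj R); rewrite !intrD !intrN intrM; lra.
Qed.

Lemma borel_semiconj_defect (g0 : G) : borel_int_fun semiconj_defect.
Proof.
apply: (borel_int_funP (t0 := g0)).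
apply: (eq_measurable_fun
  (fun g : borel_space g0 => bar (rho0 g) (Phi 0) - Phi (bar (rho1 g) 0))).
  by move=> g _; rewrite semiconj_defectP addrC addKr.
apply: measurable_funB; first exact: (measurable_bar_orbit act0 (Phi 0)).
apply: measurableT_comp; first exact: continuous_measurable_fun.
exact: (measurable_bar_orbit act1 0).
Qed.

(* Canonical lifts move points by less than [2], and [bar (rho1 g) 0] lies in [[0, 1]]. *)
Lemma bounded_semiconj_defect : bounded_int_fun semiconj_defect.
Proof.
have [M hM] := continuous_bounded_segment 0 1 Phi_cont.
exists (Num.ceil (`|Phi 0| + M + 2)) => g.
rewrite -(ler_int R) intr_norm; apply: le_trans (ceil_ge _).
have -> : (semiconj_defect g)%:~R = bar (rho0 g) (Phi 0) - Phi (bar (rho1 g) 0).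
  by rewrite semiconj_defectP addrC addKr.
have /andP [? ?] := bar0_itv (hp1 g).
have := hM (bar (rho1 g) 0); rewrite ler_norml => /(_ _)/andP [|? ?].
  by apply/andP; split; lra.
have := bar_displacement (hp0 g) (Phi 0); rewrite ltr_norml => /andP [? ?].
have := ler_norm (Phi 0); have := ler_norm (- Phi 0); rewrite normrN => ? ?.
by rewrite ler_norml; apply/andP; split; lra.
Qed.

End Semiconjugacy.

Theorem lemma4p3 (R : realType) (G : topologicalType) (mul : G -> G -> G)
    (one : G) (inv : G -> G) (rho0 rho1 : G -> circle R -> circle R)
    (phi : circle R -> circle R) (k : int) :
  lcsc_group mul one inv ->
  cont_circle_action mul rho0 -> cont_circle_action mul rho1 ->
  covering_map phi -> has_degree phi k ->
  (forall g, rho0 g \o phi = phi \o rho1 g) ->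
  bc_cohomologous mul (fun g h => euler_c (rho0 g) (rho0 h))
                      (fun g h => k * euler_c (rho1 g) (rho1 h)).
Proof.
move=> _ act0 act1 _ [Phi [Phi_lift Phi_deg]] semiconj.
exists (semiconj_defect rho0 rho1 Phi); split.
- exact: (borel_semiconj_defect act0 act1 Phi_lift semiconj one).
- exact: (bounded_semiconj_defect act0 act1 Phi_lift semiconj).
- exact: (euler_c_semiconj act0 act1 Phi_lift Phi_deg semiconj).
Qed.
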